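(* Let $(g,p)$ be any mechanism and let $(v,x,y)$ be a random triple with values in $\mathcal V^{n\times m}\times\mathcal X^n\times\mathcal Y^m$. (a) If the law of $(v,x,y)$ is bidder-symmetric, set $\mathcal Q=\mathcal Q_1$ and $\Delta=\Delta_1$; (b) if the law of $(v,x,y)$ is item-symmetric, set $\mathcal Q=\mathcal Q_2$ and $\Delta=\Delta_2$. In either case $$\mathbb E\Big[\sum_{i=1}^n[\mathcal Q p]_i(v,x,y)\Big]=\mathbb E\Big[\sum_{i=1}^n p_i(v,x,y)\Big]$$ and $$\mathbb E\Big[\sum_{i=1}^n reg_i(v,x,y)\Big]-\mathbb E\Big[\sum_{i=1}^n[\mathcal Q\, reg]_i(v,x,y)\Big]=\mathbb E\big[\Delta(g,p;v,x,y)\big]\ge0 .$$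
   Context: Setup: there are $n$ bidders and $m$ items. Bidder contexts $x=(x_1,\dots,x_n)\in\mathcal X^n$, item contexts $y=(y_1,\dots,y_m)\in\mathcal Y^m$, and a valuation (or bid) profile is a matrix $v=(v_{ij})\in\mathcal V^{n\times m}$ with $\mathcal V\subseteq\mathbb R_{\ge0}$; $v_i$ denotes row $i$, and for $v'\in\mathcal V^{n\times m}$ (or $v_i'\in\mathcal V^m$), $(v_i',v_{-i})$ is the matrix obtained from $v$ by replacing row $i$ with $v_i'$. A mechanism is a pair $(g,p)$ with allocation rule $g:\mathcal V^{n\times m}\times\mathcal X^n\times\mathcal Y^m\to\mathbb R^{n\times m}$ and payment rule $p:\mathcal V^{n\times m}\times\mathcal X^n\times\mathcal Y^m\to\mathbb R^{n}$ (an $n\times1$ column vector). The utility of bidder $i$ with valuation $v_i$ under bid profile $b$ is $u_i(v_i,b,x,y)=\sum_{j=1}^m g_{ij}(b,x,y)v_{ij}-p_i(b,x,y)$, and the ex-post regret is $reg_i(v,x,y)=\max_{b_i'\in\mathcal V^m}u_i(v_i,(b_i',v_{-i}),x,y)-u_i(v_i,v,x,y)$. For a permutation matrix $\sigma_n\in S_n$, $\sigma_n v$ permutes the rows of $v$, $\sigma_n x$ permutes bidder contexts accordingly, $\sigma_n p$ permutes entries of $p$; for $\sigma_m\in S_m$, $v\sigma_m$ permutes columns of $v$ and $y\sigma_m$ permutes item contexts accordingly. Bidder averaging: $\mathcal Q_1 g(v,x,y)=\frac1{n!}\sum_{\sigma_n}\sigma_n^{-1}g(\sigma_nv,\sigma_nx,y)$,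 $\mathcal Q_1 p(v,x,y)=\frac1{n!}\sum_{\sigma_n}\sigma_n^{-1}p(\sigma_nv,\sigma_nx,y)$. Item averaging: $\mathcal Q_2 g(v,x,y)=\frac1{m!}\sum_{\sigma_m}g(v\sigma_m,x,y\sigma_m)\sigma_m^{-1}$, $\mathcal Q_2 p(v,x,y)=\frac1{m!}\sum_{\sigma_m}p(v\sigma_m,x,y\sigma_m)$. For an averaging $\mathcal Q$, $\mathcal Q u$ and $\mathcal Q\,reg$ denote the utility and ex-post regret induced (by the formulas above) by the mechanism $(\mathcal Q g,\mathcal Q p)$. The regret gap is $\Delta_\cdot(g,p;v,x,y)=\max_{v'\in\mathcal V^{n\times m}}\sum_{i=1}^n u_i(v_i,(v_i',v_{-i}),x,y)-\max_{v'\in\mathcal V^{n\times m}}\sum_{i=1}^n[\mathcal Q_\cdot u]_i(v_i,(v_i',v_{-i}),x,y)$ with $\mathcal Q_\cdot\in\{\mathcal Q_1,\mathcal Q_2\}$ giving $\Delta_1,\Delta_2$. The law of $(v,x,y)$ is bidder-symmetric if $(\sigma_nv,\sigma_nx,y)$ has the same law as $(v,x,y)$ for every $\sigma_n\in S_n$, and item-symmetric if $(v\sigma_m,x,y\sigma_m)$ has the same law as $(v,x,y)$ for every $\sigma_m\in S_m$. All maxima are assumed attained, and all functions measurable with finite expectations. *)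

From HB Require Import structures.
From mathcomp Require Import all_boot all_algebra fingroup perm.
From mathcomp Require Import all_classical all_reals all_analysis.
Set Implicit Arguments. Unset Strict Implicit. Unset Printing Implicit Defensive.
Import GRing.Theory Num.Theory.
Local Open Scope classical_set_scope.
Local Open Scope ring_scope.

Record profile (R : realType) (n m : nat) (X Y : Type) := Profile {
  pv : 'I_n -> 'I_m -> R ;
  px : 'I_n -> X ;
  py : 'I_m -> Y }.

HB.instance Definition _ (R : realType) (n m : nat) (X Y : Type) :=
  gen_eqMixin (profile R n m X Y).
HB.instance Definition _ (R : realType) (n m : nat) (X Y : Type) :=
  gen_choiceMixin (profile R n m X Y).
HB.instance Definition _ (R : realType) (n m : nat) (dX dY : measure_display)
  (X : measurableType dX) (Y : measurableType dY) :=
  isPointed.Build (profile R n m X Y) (Profile (fun _ _ => 0) (fun=> point) (fun=> point)).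

Definition prof_gen (R : realType) (n m : nat) (dX dY : measure_display)
  (X : measurableType dX) (Y : measurableType dY)
  : set (set (profile R n m X Y)) :=
  [set A | (exists i j (B : set R), measurable B /\ A = [set z | B (pv z i j)])
        \/ (exists i (B : set X), measurable B /\ A = [set z | B (px z i)])
        \/ (exists j (B : set Y), measurable B /\ A = [set z | B (py z j)])].
Arguments prof_gen R n m {dX dY} X Y.


Notation ProfM R n m X Y := (g_sigma_algebraType (prof_gen R n m X Y)).

Record mech (R : realType) (n m : nat) (X Y : Type) := Mech {
  alloc : profile R n m X Y -> 'I_n -> 'I_m -> R ;
  pay   : profile R n m X Y -> 'I_n -> R }.

Definition rowrep (R : realType) (n m : nat) (v : 'I_n -> 'I_m -> R)
  (i : 'I_n) (r : 'I_m -> R) : 'I_n -> 'I_m -> R :=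
  fun k j => if k == i then r j else v k j.

Definition deviate (R : realType) (n m : nat) (X Y : Type)
  (z : profile R n m X Y) (i : 'I_n) (r : 'I_m -> R) : profile R n m X Y :=
  Profile (rowrep (pv z) i r) (px z) (py z).

Definition util (R : realType) (n m : nat) (X Y : Type) (M : mech R n m X Y)
  (i : 'I_n) (vi : 'I_m -> R) (b : profile R n m X Y) : R :=
  \sum_(j < m) alloc M b i j * vi j - pay M b i.

Definition Vrow (R : realType) (m : nat) (V : set R) : set ('I_m -> R) :=
  [set r | forall j, V (r j)].
Definition Vmat (R : realType) (n m : nat) (V : set R) : set ('I_n -> 'I_m -> R) :=
  [set w | forall i j, V (w i j)].

Definition brset (R : realType) (n m : nat) (X Y : Type) (V : set R)
  (M : mech R n m X Y) (i : 'I_n) (z : profile R n m X Y) : set R :=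
  [set util M i (pv z i) (deviate z i r) | r in Vrow V].

Definition swset (R : realType) (n m : nat) (X Y : Type) (V : set R)
  (M : mech R n m X Y) (z : profile R n m X Y) : set R :=
  [set \sum_(i < n) util M i (pv z i) (deviate z i (w i)) | w in Vmat V].

Definition has_max (R : realType) (S : set R) : Prop :=
  exists2 s, S s & forall t, S t -> t <= s.

(* the maxima (the sets are assumed to attain their sup) *)
Definition bestu (R : realType) (n m : nat) (X Y : Type) (V : set R)
  (M : mech R n m X Y) (i : 'I_n) (z : profile R n m X Y) : R :=
  sup (brset V M i z).
Definition swmax (R : realType) (n m : nat) (X Y : Type) (V : set R)
  (M : mech R n m X Y) (z : profile R n m X Y) : R :=
  sup (swset V M z).

Definition reg (R : realType) (n m : nat) (X Y : Type) (V : set R)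
  (M : mech R n m X Y) (i : 'I_n) (z : profile R n m X Y) : R :=
  bestu V M i z - util M i (pv z i) z.

Definition permB (R : realType) (n m : nat) (X Y : Type) (s : 'S_n)
  (z : profile R n m X Y) : profile R n m X Y :=
  Profile (fun i j => pv z (s i) j) (fun i => px z (s i)) (py z).

Definition permI (R : realType) (n m : nat) (X Y : Type) (t : 'S_m)
  (z : profile R n m X Y) : profile R n m X Y :=
  Profile (fun i j => pv z i (t j)) (px z) (fun j => py z (t j)).

Definition Q1 (R : realType) (n m : nat) (X Y : Type) (M : mech R n m X Y)
  : mech R n m X Y :=
  Mech (fun z i j => (n`!%:R)^-1 * \sum_(s : 'S_n) alloc M (permB s z) ((s^-1)%g i) j)
       (fun z i => (n`!%:R)^-1 * \sum_(s : 'S_n) pay M (permB s z) ((s^-1)%g i)).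

Definition Q2 (R : realType) (n m : nat) (X Y : Type) (M : mech R n m X Y)
  : mech R n m X Y :=
  Mech (fun z i j => (m`!%:R)^-1 * \sum_(t : 'S_m) alloc M (permI t z) i ((t^-1)%g j))
       (fun z i => (m`!%:R)^-1 * \sum_(t : 'S_m) pay M (permI t z) i).

Definition regret_gap (R : realType) (n m : nat) (X Y : Type) (V : set R)
  (M QM : mech R n m X Y) (z : profile R n m X Y) : R :=
  swmax V M z - swmax V QM z.

Definition bidder_sym (R : realType) (n m : nat) (dX dY : measure_display)
  (X : measurableType dX) (Y : measurableType dY)
  (mu : probability (ProfM R n m X Y) R) : Prop :=
  forall (s : 'S_n) (A : set (ProfM R n m X Y)),
    measurable A -> mu (permB s @^-1` A) = mu A.
Definition item_sym (R : realType) (n m : nat) (dX dY : measure_display)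
  (X : measurableType dX) (Y : measurableType dY)
  (mu : probability (ProfM R n m X Y) R) : Prop :=
  forall (t : 'S_m) (A : set (ProfM R n m X Y)),
    measurable A -> mu (permI t @^-1` A) = mu A.

Definition regular (R : realType) (n m : nat) (dX dY : measure_display)
  (X : measurableType dX) (Y : measurableType dY) (V : set R)
  (mu : probability (ProfM R n m X Y) R) (M : mech R n m X Y) : Prop :=
  [/\ (forall z : profile R n m X Y, Vmat V (pv z) ->
         (forall i, has_max (brset V M i z)) /\ has_max (swset V M z)),
      (forall i, mu.-integrable setT (fun z : ProfM R n m X Y => (pay M z i)%:E)),
      (forall i, mu.-integrable setT (fun z : ProfM R n m X Y => (util M i (pv z i) z)%:E)),
      (forall i, mu.-integrable setT (fun z : ProfM R n m X Y => (bestu V M i z)%:E)) &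
      mu.-integrable setT (fun z : ProfM R n m X Y => (swmax V M z)%:E)].

From HB Require Import structures.
From mathcomp Require Import all_boot all_algebra fingroup perm.
From mathcomp Require Import all_classical all_reals all_analysis.
Import order.Order.TTheory GRing.Theory Num.Theory.
Local Open Scope classical_set_scope.
Local Open Scope ring_scope.
Set Implicit Arguments. Unset Strict Implicit. Unset Printing Implicit Defensive.

(* Both averagings Q1 (over bidders) and Q2 (over items) are instances of one
   construction: QM is the average of M over a finite family of relabelings
   z |-> relabel (a s) (b s) z of the profile (rows by a s, columns by b s).
   The proof is carried out once for such an abstract averaging:
   - measure theory: a measure-preserving map leaves integrals unchanged, hence
     so does averaging an integrable function over measure-preserving maps;
   - mechanism algebra: the sum of best responses equals the maximal welfare
     under joint unilateral deviations, and the welfare of QM under a deviation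
     w is the average of the welfares of M at the relabeled profiles under the
     relabeled deviations; hence the truthful utilities of QM average those of
     M, and the maximal welfare of QM is at most the average of those of M;
   - expected total regret = E[max welfare] - E[truthful utility], so that
     E[reg M] - E[reg QM] = E[max welfare M] - E[max welfare QM] = E[Delta] >= 0.
   Finally Q1 and Q2 are shown to be averagings in this sense, and the
   symmetry of the law says exactly that the relabelings preserve it. *)

Section Expectation.
Context d (T : measurableType d) (R : realType) (mu : {measure set T -> \bar R}).
Local Open Scope ereal_scope.

Definition measure_preserving (phi : T -> T) : Prop :=
  measurable_fun setT phi /\ forall A, measurable A -> mu (phi @^-1` A) = mu A.

Lemma integral_preserving (phi : T -> T) (f : T -> \bar R) :
  measure_preserving phi -> mu.-integrable setT f ->
  mu.-integrable setT (f \o phi) /\ \int[mu]_z f (phi z) = \int[mu]_z f z.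
Proof.
move=> [mphi inv] intf; have mf := measurable_int _ intf.
have push (g : T -> \bar R) : \int[pushforward mu phi]_z g z = \int[mu]_z g z.
  by apply: eq_measure_integral => A mA _; exact: inv.
have int_fphi : mu.-integrable setT (f \o phi).
  apply/integrableP; split.
    move=> _ B mB; have := mphi measurableT _ (mf measurableT B mB).
    by rewrite !setTI.
  have := ge0_integral_pushforward mphi mu measurableT
    (measurable_int _ (integrable_abse intf)) (fun y _ => abse_ge0 (f y)).
  by rewrite preimage_setT push => <-; case/integrableP: intf.
split => //.
by rewrite -[RHS]push (integral_pushforward mphi mf) // preimage_setT.
Qed.

Lemma integral_average (S : finType) (phi : S -> T -> T) (f : T -> R) :
  (0 < #|S|)%N -> (forall s, measure_preserving (phi s)) ->
  mu.-integrable setT (EFin \o f) ->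
  let avg z := (#|S|%:R^-1 * \sum_(s : S) f (phi s z))%R in
  mu.-integrable setT (EFin \o avg) /\ \int[mu]_z (avg z)%:E = \int[mu]_z (f z)%:E.
Proof.
move=> S_gt0 pres intf avg.
have int_fs s : mu.-integrable setT (EFin \o (fun z => f (phi s z))).
  exact: (integral_preserving (pres s) intf).1.
have sumE z : (\sum_(s : S) f (phi s z))%:E = \sum_(s : S) (f (phi s z))%:E.
  by rewrite sumEFin.
have int_sum : mu.-integrable setT (fun z => \sum_(s : S) (f (phi s z))%:E).
  by apply: integrable_sum => // s _; exact: int_fs.
split.
  apply: eq_integrable (integrableZl measurableT (#|S|%:R^-1) int_sum) => // z _.
  by rewrite /= EFinM sumE.
under eq_integral do rewrite EFinM sumE.
rewrite integralZl // integral_sum //.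
under eq_bigr do rewrite (integral_preserving (pres _) intf).2.
have /fineK <- := integrable_fin_num measurableT intf.
rewrite sumEFin -EFinM sumr_const (_ : #|xpredT| = #|S|) //.
rewrite -[X in (_ * X)%R]mulr_natl mulKf //.
by rewrite pnatr_eq0 -lt0n.
Qed.

Lemma integrable_bigsum (I : finType) (F : I -> T -> R) :
  (forall i, mu.-integrable setT (EFin \o F i)) ->
  mu.-integrable setT (fun z => (\sum_(i : I) F i z)%:E).
Proof.
move=> intF.
have : mu.-integrable setT (fun z => \sum_(i : I) (F i z)%:E).
  by apply: integrable_sum => // i _; exact: intF.
by apply: eq_integrable => // z _; rewrite sumEFin.
Qed.

Lemma ae_le_integral (f g : T -> \bar R) :
  mu.-integrable setT f -> mu.-integrable setT g ->
  {ae mu, forall z, f z <= g z} -> \int[mu]_z f z <= \int[mu]_z g z.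
Proof.
move=> intf intg [N [mN N0 fgN]].
rewrite (negligible_integral mN measurableT intf N0).
rewrite (negligible_integral mN measurableT intg N0).
have mTN : measurable (setT `\` N) by exact: measurableD.
apply: le_integral => //; [exact: integrableS intf|exact: integrableS intg|].
move=> z /set_mem [_ Nz]; apply: contrapT => nfg; exact: Nz (fgN z nfg).
Qed.

End Expectation.

Section Mechanisms.
Variables (R : realType) (n m : nat) (X Y : Type).
Local Notation prof := (profile R n m X Y).
Local Notation mechanism := (mech R n m X Y).

Definition relabel (a : 'I_n -> 'I_n) (b : 'I_m -> 'I_m) (z : prof) : prof :=
  Profile (fun i j => pv z (a i) (b j)) (fun i => px z (a i)) (fun j => py z (b j)).

Definition welfare (K : mechanism) (z : prof) (w : 'I_n -> 'I_m -> R) : R :=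
  \sum_(i < n) util K i (pv z i) (deviate z i (w i)).

Lemma welfare_truthful (K : mechanism) (z : prof) :
  welfare K z (pv z) = \sum_(i < n) util K i (pv z i) z.
Proof.
apply: eq_bigr => i _; case: z => v x y; congr (util _ _ _ (Profile _ _ _)).
by apply/funext => k; apply/funext => j; rewrite /rowrep; case: eqP => [->|].
Qed.

Lemma has_max_sup (S : set R) :
  has_max S -> S (sup S) /\ forall t, S t -> t <= sup S.
Proof.
move=> [s Ss s_max]; suff -> : sup S = s by [].
apply/le_anti/andP; split; first by apply: ge_sup; [exists s|move=> t /s_max].
by apply: sup_upper_bound => //; split; [exists s|exists s => t /s_max].
Qed.

Variable V : set R.

(* Best responses can be chosen independently for each bidder, so the sum of
   the best-response utilities is the maximal welfare under joint deviations. *)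
Lemma sum_bestu (K : mechanism) (z : prof) :
  (forall i, has_max (brset V K i z)) -> has_max (swset V K z) ->
  \sum_(i < n) bestu V K i z = swmax V K z.
Proof.
move=> brmax swmax_att; have [[w Vw wE] sw_ub] := has_max_sup swmax_att.
apply/le_anti/andP; split; last first.
  rewrite /swmax -wE; apply: ler_sum => i _.
  by apply: (has_max_sup (brmax i)).2; exists (w i).
have /choice [w' w'E] : forall i, exists r, Vrow V r /\
    util K i (pv z i) (deviate z i r) = bestu V K i z.
  by move=> i; have [[r Vr rE] _] := has_max_sup (brmax i); exists r.
apply: sw_ub; exists w'; first by move=> i; exact: (w'E i).1.
by apply: eq_bigr => i _; exact: (w'E i).2.
Qed.

Definition averaged_by (S : finType) (a : S -> 'I_n -> 'I_n) (b : S -> 'I_m -> 'I_m)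
    (M QM : mechanism) : Prop :=
  (forall z, \sum_(i < n) pay QM z i
     = #|S|%:R^-1 * \sum_(s : S) \sum_(i < n) pay M (relabel (a s) (b s) z) i) /\
  (forall z w, welfare QM z w
     = #|S|%:R^-1 * \sum_(s : S)
         welfare M (relabel (a s) (b s) z) (fun i j => w (a s i) (b s j))).

Lemma truthful_averaged (S : finType) (a : S -> 'I_n -> 'I_n) (b : S -> 'I_m -> 'I_m)
    (M QM : mechanism) (z : prof) :
  averaged_by a b M QM ->
  \sum_(i < n) util QM i (pv z i) z = #|S|%:R^-1 * \sum_(s : S)
    \sum_(i < n) util M i (pv (relabel (a s) (b s) z) i) (relabel (a s) (b s) z).
Proof.
move=> [_ welfareE]; rewrite -welfare_truthful welfareE; congr (_ * _).
by apply: eq_bigr => s _; rewrite -welfare_truthful.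
Qed.

(* Every deviation welfare of QM is an average of deviation welfares of M, so
   the maximal welfare of QM is at most the average maximal welfare of M. *)
Lemma swmax_averaged (S : finType) (a : S -> 'I_n -> 'I_n) (b : S -> 'I_m -> 'I_m)
    (M QM : mechanism) (z : prof) :
  averaged_by a b M QM -> has_max (swset V QM z) ->
  (forall s, has_max (swset V M (relabel (a s) (b s) z))) ->
  swmax V QM z <= #|S|%:R^-1 * \sum_(s : S) swmax V M (relabel (a s) (b s) z).
Proof.
move=> [_ welfareE] Qmax Mmax; have [[w Vw wE] _] := has_max_sup Qmax.
rewrite [swmax _ _ _]/swmax -wE -/(welfare QM z w) welfareE.
rewrite ler_wpM2l ?invr_ge0 //.
apply: ler_sum => s _; apply: (has_max_sup (Mmax s)).2.
by exists (fun i j => w (a s i) (b s j)) => // i j; exact: Vw.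
Qed.

End Mechanisms.

Section BidderAveraging.
Variables (R : realType) (n m : nat) (X Y : Type).

Lemma util_Q1 (M : mech R n m X Y) i vi (b : profile R n m X Y) :
  util (Q1 M) i vi b = n`!%:R^-1 * \sum_(s : 'S_n) util M (s^-1 i)%g vi (permB s b).
Proof.
rewrite /util /=; under eq_bigr do rewrite -mulrA mulr_suml.
by rewrite -mulr_sumr -mulrBr exchange_big -sumrB.
Qed.

Lemma permB_deviate (s : 'S_n) (z : profile R n m X Y) i r :
  permB s (deviate z i r) = deviate (permB s z) (s^-1 i)%g r.
Proof.
congr Profile; apply/funext => k; apply/funext => j; rewrite /= /rowrep.
suff -> : (s k == i) = (k == (s^-1)%g i) by [].
by apply/eqP/eqP => [<-|->]; rewrite ?permK ?permKV.
Qed.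

Lemma Q1_averaged (M : mech R n m X Y) :
  averaged_by (fun s : 'S_n => s : 'I_n -> 'I_n) (fun=> id) M (Q1 M).
Proof.
rewrite /averaged_by card_Sn; split => [z | z w].
  rewrite /= -mulr_sumr exchange_big; congr (_ * _); apply: eq_bigr => s _.
  by rewrite [RHS](reindex_inj (@perm_inj _ s^-1)).
rewrite /welfare; under eq_bigr do rewrite util_Q1.
rewrite -mulr_sumr exchange_big; congr (_ * _); apply: eq_bigr => s _.
rewrite (reindex_inj (@perm_inj _ s)); apply: eq_bigr => k _.
by rewrite permB_deviate permK.
Qed.

End BidderAveraging.

Section ItemAveraging.
Variables (R : realType) (n m : nat) (X Y : Type).

Lemma util_Q2 (M : mech R n m X Y) i vi (b : profile R n m X Y) :
  util (Q2 M) i vi b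
  = m`!%:R^-1 * \sum_(t : 'S_m) util M i (fun j => vi (t j)) (permI t b).
Proof.
rewrite /util /=; under eq_bigr do rewrite -mulrA mulr_suml.
rewrite -mulr_sumr -mulrBr exchange_big -sumrB; congr (_ * _).
apply: eq_bigr => t _; congr (_ - _).
by rewrite (reindex_inj (@perm_inj _ t)); apply: eq_bigr => j _; rewrite permK.
Qed.

(* Item averaging is averaging over the column relabelings t in S_m; permuting
   items commutes with deviations definitionally. *)
Lemma Q2_averaged (M : mech R n m X Y) :
  averaged_by (fun=> id) (fun t : 'S_m => t : 'I_m -> 'I_m) M (Q2 M).
Proof.
rewrite /averaged_by card_Sn; split => [z | z w].
  by rewrite /= -mulr_sumr exchange_big.
rewrite /welfare; under eq_bigr do rewrite util_Q2.
by rewrite -mulr_sumr exchange_big.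
Qed.

End ItemAveraging.

(* Relabelings are measurable: they map generators of the sigma-algebra to
   generators. *)
Lemma relabel_measurable (R : realType) (n m : nat) (dX dY : measure_display)
    (X : measurableType dX) (Y : measurableType dY)
    (a : 'I_n -> 'I_n) (b : 'I_m -> 'I_m) :
  measurable_fun setT (relabel a b : ProfM R n m X Y -> ProfM R n m X Y).
Proof.
apply: (@measurability _ _ (ProfM R n m X Y) (ProfM R n m X Y) setT _
  (prof_gen R n m X Y)) => //.
move=> _ [A genA <-]; apply: sub_sigma_algebra; rewrite setTI.
case: genA => [[i [j [B [mB ->]]]]|[[i [B [mB ->]]]|[j [B [mB ->]]]]].
- by left; exists (a i), (b j), B.
- by right; left; exists (a i), B.
- by right; right; exists (b j), B.
Qed.

Section Averaging.
Context (R : realType) (n m : nat) (dX dY : measure_display).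
Context (X : measurableType dX) (Y : measurableType dY) (V : set R).
Context (mu : probability (ProfM R n m X Y) R).
Hypothesis V_supp : {ae mu, forall z : ProfM R n m X Y, Vmat V (pv z)}.
Local Open Scope ereal_scope.

Lemma regret_integral (K : mech R n m X Y) : regular V mu K ->
  \int[mu]_z (\sum_(i < n) reg V K i z)%:E
  = \int[mu]_z (swmax V K z)%:E - \int[mu]_z (\sum_(i < n) util K i (pv z i) z)%:E.
Proof.
case=> Kmax _ int_util int_bestu int_swmax.
have int_sum_util := integrable_bigsum (fun i => int_util i).
have int_sum_bestu := integrable_bigsum (fun i => int_bestu i).
under eq_integral do rewrite sumrB EFinB.
rewrite integralB_EFin //; congr (_ - _).
apply: ae_eq_integral => //; [exact: measurable_int int_sum_bestu|
                              exact: measurable_int int_swmax|].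
apply: filterS V_supp => z Vz _; have [brmax swmax_att] := Kmax z Vz.
by rewrite sum_bestu.
Qed.

Theorem averaging_theorem (S : finType) (a : S -> 'I_n -> 'I_n) (b : S -> 'I_m -> 'I_m)
    (M QM : mech R n m X Y) :
  (0 < #|S|)%N -> (forall s, measure_preserving mu (relabel (a s) (b s))) ->
  averaged_by a b M QM -> regular V mu M -> regular V mu QM ->
     \int[mu]_z (\sum_(i < n) pay QM z i)%:E
     = \int[mu]_z (\sum_(i < n) pay M z i)%:E
  /\ \int[mu]_z (\sum_(i < n) reg V M i z)%:E
      - \int[mu]_z (\sum_(i < n) reg V QM i z)%:E
     = \int[mu]_z (regret_gap V M QM z)%:E
  /\ 0 <= \int[mu]_z (regret_gap V M QM z)%:E.
Proof.
move=> S_gt0 pres avg regM regQ; have average := integral_average S_gt0 pres.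
have [Mmax int_payM int_utilM _ int_swmaxM] := regM.
have [Qmax _ _ _ int_swmaxQ] := regQ.
have int_sum_payM := integrable_bigsum (fun i => int_payM i).
have int_sum_utilM := integrable_bigsum (fun i => int_utilM i).
have payE : \int[mu]_z (\sum_(i < n) pay QM z i)%:E
    = \int[mu]_z (\sum_(i < n) pay M z i)%:E.
  by under eq_integral do rewrite avg.1; exact: (average _ int_sum_payM).2.
have utilE : \int[mu]_z (\sum_(i < n) util QM i (pv z i) z)%:E
    = \int[mu]_z (\sum_(i < n) util M i (pv z i) z)%:E.
  under eq_integral do rewrite (truthful_averaged _ avg).
  exact: (average _ int_sum_utilM).2.
have swmax_le : \int[mu]_z (swmax V QM z)%:E <= \int[mu]_z (swmax V M z)%:E.
  have [int_avg <-] := average _ int_swmaxM.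
  apply: ae_le_integral => //; apply: filterS V_supp => z Vz; rewrite lee_fin.
  apply: swmax_averaged avg (Qmax z Vz).2 _ => s.
  by apply: (Mmax _ _).2 => i j; exact: Vz.
have gapE : \int[mu]_z (regret_gap V M QM z)%:E
    = \int[mu]_z (swmax V M z)%:E - \int[mu]_z (swmax V QM z)%:E.
  by under eq_integral do rewrite EFinB; rewrite integralB_EFin.
split; [exact: payE | split].
  have utilM_fin := integrable_fin_num measurableT int_sum_utilM.
  rewrite !regret_integral // utilE gapE oppeB; last first.
    by rewrite adde_defN fin_num_adde_defl.
  by rewrite addeA addeAC subeK.
by rewrite gapE sube_ge0 // integrable_fin_num.
Qed.
End Averaging.

Unset Implicit Arguments.

(* Symmetry of the law makes the bidder (resp. item) relabelings measure-preserving. *)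
Theorem theorem1 (R : realType) (n m : nat) (dX dY : measure_display)
  (X : measurableType dX) (Y : measurableType dY)
  (V : set R) (V_nneg : forall r, V r -> 0 <= r)
  (mu : probability (ProfM R n m X Y) R)
  (mu_supp : {ae mu, forall z : ProfM R n m X Y, Vmat V (pv z)})
  (M : mech R n m X Y) (M_reg : regular V mu M) :
  (bidder_sym mu -> regular V mu (Q1 M) ->
     (\int[mu]_z (\sum_(i < n) pay (Q1 M) z i)%:E
       = \int[mu]_z (\sum_(i < n) pay M z i)%:E)%E
   /\ (\int[mu]_z (\sum_(i < n) reg V M i z)%:E
        - \int[mu]_z (\sum_(i < n) reg V (Q1 M) i z)%:E
       = \int[mu]_z (regret_gap V M (Q1 M) z)%:E)%E
   /\ (0 <= \int[mu]_z (regret_gap V M (Q1 M) z)%:E)%E)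
  /\
  (item_sym mu -> regular V mu (Q2 M) ->
     (\int[mu]_z (\sum_(i < n) pay (Q2 M) z i)%:E
       = \int[mu]_z (\sum_(i < n) pay M z i)%:E)%E
   /\ (\int[mu]_z (\sum_(i < n) reg V M i z)%:E
        - \int[mu]_z (\sum_(i < n) reg V (Q2 M) i z)%:E
       = \int[mu]_z (regret_gap V M (Q2 M) z)%:E)%E
   /\ (0 <= \int[mu]_z (regret_gap V M (Q2 M) z)%:E)%E).
Proof.
split => [bsym Q1_reg | isym Q2_reg].
- apply: (averaging_theorem mu_supp _ _ (Q1_averaged M) M_reg Q1_reg).
    by rewrite card_Sn fact_gt0.
  by move=> s; split; [exact: relabel_measurable | exact: bsym].
- apply: (averaging_theorem mu_supp _ _ (Q2_averaged M) M_reg Q2_reg).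
    by rewrite card_Sn fact_gt0.
  by move=> t; split; [exact: relabel_measurable | exact: isym].
Qed.
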